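(* Let $\mathcal{R}_1, \mathcal{R}_2$ be families of ranges and let $k,m$ be positive integers. Suppose that we have hitting $k$-cliques with respect to $\mathcal{R}_1$ and hitting $k$-cliques with respect to $\mathcal{R}_2$ (for these $k,m$). Then for $\mathcal{R} = \mathcal{R}_1 \cup \mathcal{R}_2$ it holds that $m_{\mathcal{R}}(k) \leq m$.
   Context: For a finite set $V \subset \mathbb{R}^2$ and a family $\mathcal{R}$ of subsets of $\mathbb{R}^2$ (ranges), $\mathcal{H}(V,\mathcal{R},m)$ is the hypergraph on $V$ whose hyperedges are the sets $V \cap R$, $R \in \mathcal{R}$, of size exactly $m$. A coloring $c\colon V \to [k]$ is polychromatic if every hyperedge contains a vertex of each of the $k$ colors. Point sets are in general position (pairwise distinct $x$-coordinates, $y$-coordinates, and values $x+y$). $m_{\mathcal{R}}(k)$ is the smallest $m$ such that for every finite $V \subset \mathbb{R}^2$ in general position, $\mathcal{H}(V,\mathcal{R},m)$ admits a polychromatic $k$-coloring ($\infty$ if none exists). For fixed $k,m,\mathcal{R}$ we say we have hitting $k$-cliques if for every finite $V \subset \mathbb{R}^2$ there exist pairwise disjoint $k$-element subsets of $V$ such that every hyperedge of $\mathcal{H}(V,\mathcal{R},m)$ fully contains at least one of these subsets. *)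

From HB Require Import structures.
From mathcomp Require Import all_boot all_order all_algebra.
From mathcomp Require Import finmap.
From mathcomp Require Import boolp classical_sets reals.
Set Implicit Arguments. Unset Strict Implicit. Unset Printing Implicit Defensive.
Import Order.TTheory GRing.Theory Num.Theory.

Local Open Scope ring_scope.

Definition plane (R : realType) := (R * R)%type.

Definition general_position (R : realType) (V : {fset plane R}) : Prop :=
  forall p q, p \in V -> q \in V -> p != q ->
    [/\ p.1 != q.1, p.2 != q.2 & p.1 + p.2 != q.1 + q.2].

Definition trace (R : realType) (V : {fset plane R}) (Rg : set (plane R))
  : {fset plane R} := [fset x in V | `[< Rg x >]]%fset.

Definition hyperedge (R : realType) (Rs : set (set (plane R))) (m : nat)
  (V : {fset plane R}) (E : {fset plane R}) : Prop :=
  exists Rg, Rs Rg /\ E = trace V Rg /\ #|` E|%fset = m.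

Definition polychromatic (R : realType) (k : nat) (Rs : set (set (plane R)))
  (m : nat) (V : {fset plane R}) (c : plane R -> 'I_k) : Prop :=
  forall E, hyperedge Rs m V E ->
    forall i : 'I_k, exists2 x, x \in E & c x = i.

Definition admits_polychromatic (R : realType) (Rs : set (set (plane R)))
  (k m : nat) : Prop :=
  forall V : {fset plane R}, general_position V ->
    exists c : plane R -> 'I_k, polychromatic Rs m V c.

(* m_Rs(k) <= m, i.e. the smallest m' with the above property exists and is
   at most m *)
Definition mR_le (R : realType) (Rs : set (set (plane R))) (k m : nat) : Prop :=
  exists m' : nat, (m' <= m)%N /\ admits_polychromatic Rs k m'.

Definition hitting_cliques (R : realType) (Rs : set (set (plane R)))
  (k m : nat) : Prop :=
  forall V : {fset plane R},
    exists C : {fset {fset plane R}},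
      (forall A, A \in C -> fsubset A V /\ #|` A|%fset = k) /\
      (forall A B, A \in C -> B \in C -> A != B -> fdisjoint A B) /\
      (forall E, hyperedge Rs m V E -> exists2 A, A \in C & fsubset A E).

From HB Require Import structures.
From mathcomp Require Import all_boot all_order all_algebra perm.
From mathcomp Require Import finmap.
From mathcomp Require Import boolp classical_sets reals.
Set Implicit Arguments. Unset Strict Implicit. Unset Printing Implicit Defensive.
Local Open Scope fset_scope.

(* It suffices to colour V with k colours so that no two points of a common
   clique, from either hitting family, share a colour: every hyperedge of
   R1 \/ R2 contains such a clique, which is then rainbow.  Viewing each point
   as an edge between its clique of the first family and its clique of the
   second, this is Koenig's edge-colouring theorem for bipartite multigraphs of
   maximum degree k.  The colouring is built greedily: if a new point x sees
   colour a free in its first clique and b free in its second, exchange a and b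
   along the alternating Kempe chain that starts at the a-coloured point of its
   second clique.  The chain enters b-coloured points only through first-family
   edges from a-coloured points, so it never reaches x's first clique, and a
   becomes free on both sides. *)

Section ProperColorings.

Variables (T : choiceType) (k : nat).

Definition proper_on (r : T -> T -> Prop) (S : {fset T}) (c : T -> 'I_k) :=
  forall z w, z \in S -> w \in S -> r z w -> c z = c w -> z = w.

Definition misses (r : T -> T -> Prop) (S : {fset T}) (c : T -> 'I_k) x i :=
  forall z, z \in S -> r x z -> c z != i.

Lemma exists_color_notin (s : {fset T}) (c : T -> 'I_k) :
  (#|` s| < k)%N -> exists i, forall z, z \in s -> c z != i.
Proof.
move=> small; apply: contrapT => all_hit.
have: (size (enum 'I_k) <= size [seq c z | z <- s])%N.
  apply: uniq_leq_size (enum_uniq _) _ => i _; apply: contrapT => not_hit.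
  by apply: all_hit; exists i => z zs; apply: contra_notN not_hit => /eqP <-; apply: map_f.
by rewrite size_enum_ord size_map leqNgt small.
Qed.

Lemma rainbow (A : {fset T}) (c : T -> 'I_k) :
  #|` A| = k -> {in A &, injective c} -> forall i, exists2 x, x \in A & c x = i.
Proof.
move=> cardA inj_c i.
have uniq_cA : uniq [seq c z | z <- A] by rewrite map_inj_in_uniq.
have size_cA : size (enum 'I_k) = size [seq c z | z <- A].
  by rewrite size_enum_ord size_map cardA.
have [_ eq_cA] := uniq_min_size uniq_cA (fun j _ => mem_enum _ j) (eq_leq size_cA).
have /mapP[x xA ->] : i \in [seq c z | z <- A] by rewrite eq_cA mem_enum.
by exists x.
Qed.

Lemma proper_fset1U (r : T -> T -> Prop) S c x a :
  (forall z w, r z w -> r w z) -> proper_on r S c -> misses r S c x a ->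
  proper_on r (x |` S) (fun z => if z == x then a else c z).
Proof.
move=> r_sym c_proper x_misses_a z w; rewrite !in_fset1U.
have clash u : u \in S -> r x u -> a = c u -> False.
  by move=> uS rxu a_cu; move: (x_misses_a u uS rxu); rewrite a_cu eqxx.
case: (eqVneq z x) => [->|zx]; case: (eqVneq w x) => [->|wx] //= zS wS rzw.
- by move/clash => /(_ wS rzw).
- by move/esym/clash => /(_ zS (r_sym _ _ rzw)).
- exact: c_proper.
Qed.

Lemma proper_swap (r : T -> T -> Prop) S c (K : T -> Prop) a b :
  (forall z w, r z w -> r w z) -> proper_on r S c ->
  (forall u, K u -> c u = a \/ c u = b) ->
  (forall u v, K u -> v \in S -> r u v -> c v = a \/ c v = b -> c u != c v -> K v) ->
  proper_on r S (fun z => if `[< K z >] then tperm a b (c z) else c z).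
Proof.
move=> r_sym c_proper K_ab K_closed.
have cross u v : u \in S -> v \in S -> r u v -> K u -> ~ K v ->
    tperm a b (c u) = c v -> u = v.
  move=> uS vS ruv Ku Kv sw_cu; have [//|cuv] := eqVneq (c u) (c v).
    exact: c_proper.
  exfalso; apply: Kv; apply: K_closed cuv => //.
  by rewrite -sw_cu; case: (K_ab u Ku) => ->; rewrite ?tpermL ?tpermR; [right|left].
move=> z w zS wS rzw; case: asboolP => Kz; case: asboolP => Kw.
- by move/(can_inj (tpermK a b)); apply: c_proper.
- exact: cross.
- by move/esym/(cross _ _ wS zS (r_sym _ _ rzw) Kw Kz)/esym.
- exact: c_proper.
Qed.

End ProperColorings.

Section KempeChain.

Variables (T : choiceType) (k : nat) (r1 r2 : T -> T -> Prop).
Hypotheses (r1_sym : forall z w, r1 z w -> r1 w z) (r2_sym : forall z w, r2 z w -> r2 w z).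
Hypotheses (r1_trans : forall u v w, r1 u v -> r1 v w -> r1 u w)
  (r2_trans : forall u v w, r2 u v -> r2 v w -> r2 u w).

Let r z w := r1 z w \/ r2 z w.

Lemma r_sym z w : r z w -> r w z.
Proof. by case=> [/r1_sym|/r2_sym]; [left|right]. Qed.

Section Chain.

Variables (S : {fset T}) (c : T -> 'I_k) (x y : T) (a b : 'I_k).
Hypotheses (c_proper : proper_on r S c).
Hypotheses (x_misses_a : misses r1 S c x a) (x_misses_b : misses r2 S c x b).
Hypotheses (yS : y \in S) (r2xy : r2 x y) (cy : c y = a).

Inductive chain : T -> Prop :=
  | chain_root : chain y
  | chain_r1 u v : chain u -> c u = a -> v \in S -> r1 u v -> c v = b -> chain v
  | chain_r2 u v : chain u -> c u = b -> v \in S -> r2 u v -> c v = a -> chain v.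

Lemma neq_ab : a != b.
Proof. by rewrite -cy; apply: x_misses_b. Qed.

Lemma chain_inv u : chain u -> u \in S /\ (c u = a \/ c u = b).
Proof. by case=> [|? ? _ _ ? _ ->|? ? _ _ ? _ ->]; split=> //; [left|right|left]. Qed.

Lemma chain_pred_b v : chain v -> c v = b -> exists u, [/\ chain u, c u = a & r1 u v].
Proof.
case=> [|u v' chu cu _ r1uv _|? ? _ _ _ _ ->]; last by move/eqP; rewrite (negbTE neq_ab).
- by rewrite cy => /eqP; rewrite (negbTE neq_ab).
- by exists u.
Qed.

Lemma chain_pred_a v : chain v -> c v = a ->
  v = y \/ exists u, [/\ chain u, c u = b & r2 u v].
Proof.
case=> [|? ? _ _ _ _ ->|u v' chu cu _ r2uv _]; [by left| |by right; exists u].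
by move/eqP; rewrite eq_sym (negbTE neq_ab).
Qed.

Lemma chain_closed u v : chain u -> v \in S -> r u v ->
  c v = a \/ c v = b -> c u != c v -> chain v.
Proof.
move=> chu vS ruv cv; have [uS [cu|cu]] := chain_inv chu;
  case: cv => cv; rewrite cu cv ?eqxx // => _; case: ruv => [r1uv|r2uv].
- exact: chain_r1 chu cu vS r1uv cv.
- have [uy|[w [chw cw r2wu]]] := chain_pred_a chu cu.
    by move: r2uv; rewrite uy => /(r2_trans r2xy)/(x_misses_b vS); rewrite cv eqxx.
  suff -> : v = w by [].
  apply: c_proper vS (chain_inv chw).1 _ _; last by rewrite cv cw.
  by right; apply: r2_trans (r2_sym r2uv) (r2_sym r2wu).
- have [w [chw cw r1wu]] := chain_pred_b chu cu.
  suff -> : v = w by [].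
  apply: c_proper vS (chain_inv chw).1 _ _; last by rewrite cv cw.
  by left; apply: r1_trans (r1_sym r1uv) (r1_sym r1wu).
- exact: chain_r2 chu cu vS r2uv cv.
Qed.

Lemma chain_recolor : exists c' : T -> 'I_k,
  [/\ proper_on r S c', misses r1 S c' x a & misses r2 S c' x a].
Proof.
pose c' z := if `[< chain z >] then tperm a b (c z) else c z.
have c'_in z : chain z -> c' z = tperm a b (c z) by rewrite /c'; case: asboolP.
have c'_out z : ~ chain z -> c' z = c z by rewrite /c'; case: asboolP.
exists c'; split.
- apply: proper_swap r_sym c_proper (fun u chu => (chain_inv chu).2) _.
  exact: chain_closed.
- move=> z zS r1xz; have [chz|nchz] := pselect (chain z); last first.
    by rewrite c'_out //; apply: x_misses_a.
  rewrite c'_in //; have [_ [cz|cz]] := chain_inv chz; rewrite cz ?tpermL ?tpermR.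
    by rewrite eq_sym neq_ab.
  have [w [chw cw r1wz]] := chain_pred_b chz cz.
  have := x_misses_a (chain_inv chw).1 (r1_trans r1xz (r1_sym r1wz)).
  by rewrite cw eqxx.
- move=> z zS r2xz; have [chz|nchz] := pselect (chain z).
    rewrite c'_in //; have [_ [cz|cz]] := chain_inv chz; rewrite cz ?tpermL ?tpermR.
      by rewrite eq_sym neq_ab.
    by have := x_misses_b zS r2xz; rewrite cz eqxx.
  rewrite c'_out //; apply/eqP => cz; apply: nchz.
  suff -> : z = y by exact: chain_root.
  apply: c_proper zS yS _ _; last by rewrite cz cy.
  by right; apply: r2_trans (r2_sym r2xz) r2xy.
Qed.

End Chain.

Lemma kempe_recolor S (c : T -> 'I_k) x a b :
  proper_on r S c -> misses r1 S c x a -> misses r2 S c x b ->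
  exists c' : T -> 'I_k,
    [/\ proper_on r S c', misses r1 S c' x a & misses r2 S c' x a].
Proof.
move=> c_proper x_misses_a x_misses_b.
have [[y [yS r2xy cy]]|no_y] := pselect (exists y, [/\ y \in S, r2 x y & c y = a]).
  exact: chain_recolor c_proper x_misses_a x_misses_b yS r2xy cy.
exists c; split=> // z zS r2xz; apply/eqP => cz.
by apply: no_y; exists z.
Qed.

End KempeChain.

Section Blocks.

Variables (T : choiceType) (k : nat) (C : {fset {fset T}}).
Hypotheses (C_card : forall A, A \in C -> #|` A| = k)
  (C_disj : forall A B, A \in C -> B \in C -> A != B -> fdisjoint A B).

Definition same_block (z w : T) := exists2 A, A \in C & (z \in A) && (w \in A).

Lemma block_eq A B z : A \in C -> B \in C -> z \in A -> z \in B -> A = B.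
Proof.
move=> AinC BinC zA zB; apply/eqP/negbNE/negP => /(C_disj AinC BinC)/fdisjointP.
by move/(_ z zA); rewrite zB.
Qed.

Lemma same_block_sym z w : same_block z w -> same_block w z.
Proof. by case=> A AinC /andP[zA wA]; exists A; rewrite ?wA. Qed.

Lemma same_block_trans u v w : same_block u v -> same_block v w -> same_block u w.
Proof.
case=> A AinC /andP[uA vA] [B BinC /andP[vB wB]].
by rewrite (block_eq AinC BinC vA vB) in uA; exists B; rewrite ?uA.
Qed.

Lemma exists_missing_block_color S (c : T -> 'I_k) x : (0 < k)%N -> x \notin S ->
  exists i, misses same_block S c x i.
Proof.
move=> k_gt0 xS; have [[A AinC xA]|no_block] := pselect (exists2 A, A \in C & x \in A).
  have [|i avoid_i] := exists_color_notin c (s := A `\ x).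
    by have := cardfsD1 x A; rewrite xA C_card // add1n => ->.
  exists i => z zS [B BinC /andP[xB zB]]; apply: avoid_i.
  rewrite in_fsetD1 (block_eq AinC BinC xA xB) zB andbT.
  by apply: contraNneq xS => <-.
exists (Ordinal k_gt0) => z _ [A AinC /andP[xA _]].
by case: no_block; exists A.
Qed.

Lemma proper_block_inj (r : T -> T -> Prop) S (c : T -> 'I_k) A :
  (forall z w, same_block z w -> r z w) -> proper_on r S c ->
  A \in C -> fsubset A S -> {in A &, injective c}.
Proof.
move=> block_r c_proper AinC /fsubsetP AS z w zA wA; apply: c_proper; rewrite ?AS //.
by apply: block_r; exists A; rewrite ?zA.
Qed.

End Blocks.

Lemma proper_two_block_coloring (T : choiceType) k (C1 C2 : {fset {fset T}}) :
  (0 < k)%N ->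
  (forall A, A \in C1 -> #|` A| = k) ->
  (forall A B, A \in C1 -> B \in C1 -> A != B -> fdisjoint A B) ->
  (forall A, A \in C2 -> #|` A| = k) ->
  (forall A B, A \in C2 -> B \in C2 -> A != B -> fdisjoint A B) ->
  forall S : {fset T}, exists c : T -> 'I_k,
    proper_on (fun z w => same_block C1 z w \/ same_block C2 z w) S c.
Proof.
move=> k_gt0 C1_card C1_disj C2_card C2_disj.
elim/fset1U_rect => [|x S xS [c c_proper]].
  by exists (fun=> Ordinal k_gt0) => z w; rewrite inE.
have [a x_misses_a] := exists_missing_block_color C1_card C1_disj c k_gt0 xS.
have [b x_misses_b] := exists_missing_block_color C2_card C2_disj c k_gt0 xS.
have [c' [c'_proper x_misses_a1 x_misses_a2]] :=
  kempe_recolor (@same_block_sym _ _) (@same_block_sym _ _)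
    (@same_block_trans _ _ C1_disj) (@same_block_trans _ _ C2_disj)
    c_proper x_misses_a x_misses_b.
exists (fun z => if z == x then a else c' z).
apply: proper_fset1U c'_proper _.
  by move=> z w [/same_block_sym|/same_block_sym]; [left|right].
by move=> z zS [/x_misses_a1|/x_misses_a2]; apply.
Qed.

Lemma hyperedgeU (R : realType) (Rs1 Rs2 : set (set (plane R))) m V E :
  hyperedge (fun Rg => Rs1 Rg \/ Rs2 Rg) m V E ->
  hyperedge Rs1 m V E \/ hyperedge Rs2 m V E.
Proof. by case=> Rg [[Rs1Rg|Rs2Rg] E_def]; [left|right]; exists Rg. Qed.

Theorem theorem2 (R : realType) (Rs1 Rs2 : set (set (plane R))) (k m : nat) :
  (0 < k)%N -> (0 < m)%N ->
  hitting_cliques Rs1 k m -> hitting_cliques Rs2 k m ->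
  mR_le (fun Rg => Rs1 Rg \/ Rs2 Rg) k m.
Proof.
move=> k_gt0 _ hit1 hit2; exists m; split=> // V _.
have [C1 [C1_sub [C1_disj C1_hit]]] := hit1 V.
have [C2 [C2_sub [C2_disj C2_hit]]] := hit2 V.
have [c c_proper] := proper_two_block_coloring k_gt0
  (fun A AinC => (C1_sub A AinC).2) C1_disj (fun A AinC => (C2_sub A AinC).2) C2_disj V.
exists c => E E_edge i.
have [A A_clique AE] : exists2 A, (A \in C1) || (A \in C2) & fsubset A E.
  case/hyperedgeU: E_edge => [/C1_hit|/C2_hit] [A A_clique AE];
  by exists A; rewrite ?A_clique ?orbT.
have [AV A_card] : fsubset A V /\ #|` A| = k by case/orP: A_clique => [/C1_sub|/C2_sub].
have c_inj : {in A &, injective c}.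
  by case/orP: A_clique => AinC; apply: proper_block_inj c_proper AinC AV => z w; [left|right].
have [x xA cx] := rainbow A_card c_inj i.
by exists x => //; apply: (fsubsetP AE).
Qed.
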